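(* Let $X$ be a shift space over $\mathcal{A}_3=\{1,2,3\}$, let $\sigma\in\mathcal{S}_3$ be a morphism that is not left-invariant (resp. not right-invariant), and let $Y$ be the image of $X$ under $\sigma$. If $v\in\mathcal{L}(X)$ is a dendric bispecial factor, then every dendric extended image $u$ of $v$ satisfies $\mathcal{C}^-_Y(u)=\emptyset$ (resp. $\mathcal{C}^+_Y(u)=\emptyset$). In particular, if $X$ is dendric and $\sigma\in\mathrm{DP}(X)$, then $\mathcal{C}^-(Y)=\mathcal{C}^-_Y(\varepsilon)\ne\emptyset$ (resp. $\mathcal{C}^+(Y)=\mathcal{C}^+_Y(\varepsilon)\ne\emptyset$).
   Context: A shift space over $\mathcal{A}$ is a closed shift-invariant $X\subseteq\mathcal{A}^{\mathbb{Z}}$ in which all letters occur, with factor set $\mathcal{L}(X)$ ($\varepsilon$ the empty word). For $w\in\mathcal{L}(X)$, $\mathcal{E}_X(w)$ is the bipartite graph with left vertices $a^-$ ($aw\in\mathcal{L}(X)$), right vertices $b^+$ ($wb\in\mathcal{L}(X)$), edges $\{a^-,b^+\}$ ($awb\in\mathcal{L}(X)$); $w$ is bispecial if it has at least two left and two right vertices, dendric if $\mathcal{E}_X(w)$ is a tree; $X$ is dendric if all factors are. $\mathcal{C}^-_X(w)$ (resp. $\mathcal{C}^+_X(w)$): letters $a$ such that removing $a^-$ (resp. $a^+$) and resulting isolated vertices from $\mathcal{E}_X(w)$ leaves a disconnected graph; $\mathcal{C}^\pm(X)=\bigcup_{w\in\mathcal{L}(X)}\mathcal{C}^\pm_X(w)$.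 $\mathcal{S}_3=\{\alpha,\beta,\gamma,\eta\}\cup\{\delta^{(k)},\zeta^{(k)}:k\ge1\}$ with $\alpha:1\mapsto1,2\mapsto12,3\mapsto13$; $\beta:1\mapsto1,2\mapsto12,3\mapsto132$; $\gamma:1\mapsto1,2\mapsto12,3\mapsto123$; $\delta^{(k)}:1\mapsto1,2\mapsto123^k,3\mapsto123^{k+1}$; $\zeta^{(k)}:1\mapsto13^k,2\mapsto12,3\mapsto13^{k+1}$; $\eta:1\mapsto13,2\mapsto12,3\mapsto123$. For $\sigma\in\mathcal{S}_3$, $\mathcal{T}^-(\sigma)$ is the set of longest common suffixes of $\sigma(a_1),\sigma(a_2)$ and $\mathcal{T}^+(\sigma)$ the set of longest common prefixes of $\sigma(b_1),\sigma(b_2)$, over distinct letters; $\sigma$ is left-invariant (right-invariant) if $\mathcal{T}^-(\sigma)$ ($\mathcal{T}^+(\sigma)$) is a singleton. Image of $X$: $Y=\{S^k\sigma(x):x\in X,0\le k<|\sigma(x_0)|\}$. For non-empty $u\in\mathcal{L}(Y)$ containing $1$ there is a unique triple $(s,v,p)$, $v\in\mathcal{L}(X)$, $u=s\sigma(v)p$, with $s$ a proper suffix of $\sigma(a)$ and $p$ a non-empty prefix of $\sigma(b)$ for some $a,b$ with $avb\in\mathcal{L}(X)$; $u$ is an extended image of $v$. $\mathrm{DP}(X)$ is the set of $\sigma\in\mathcal{S}_3$ such that every bispecial extended image (in $Y$) of every $v\in\mathcal{L}(X)$ is dendric. *)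

From HB Require Import structures.
From mathcomp Require Import all_boot all_order all_algebra.
Set Implicit Arguments. Unset Strict Implicit. Unset Printing Implicit Defensive.
Import GRing.Theory Num.Theory.

Inductive A3 := a1 | a2 | a3.

Definition A3_eqb (x y : A3) : bool :=
  match x, y with a1, a1 | a2, a2 | a3, a3 => true | _, _ => false end.
Lemma A3_eqP : Equality.axiom A3_eqb.
Proof. by case; case; constructor. Qed.
HB.instance Definition _ := hasDecEq.Build A3 A3_eqP.

Definition word := seq A3.
Definition config := int -> A3.
Definition subshift := config -> Prop.

Definition shift (x : config) : config := fun n => (x (n + 1))%R.

Definition lang (X : subshift) (w : word) : Prop :=
  exists x, X x /\ exists i : int,
    forall j : nat, j < size w -> x (i + j%:Z)%R = nth a1 w j.

(* closed for the product topology (discrete alphabet) *)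
Definition closed_shift (X : subshift) : Prop :=
  forall x : config,
    (forall N : nat, exists y, X y /\ forall i : int, (`|i| <= N)%N -> y i = x i) ->
    X x.

Definition shift_space (X : subshift) : Prop :=
  closed_shift X /\
  (forall x, X x <-> X (shift x)) /\
  (forall a : A3, lang X [:: a]).

(* vertices: (false, a) = a^-  (left),  (true, b) = b^+  (right) *)
Definition vertex := (bool * A3)%type.

Definition egv (L : word -> Prop) (w : word) (v : vertex) : Prop :=
  if v.1 then L (rcons w v.2) else L (v.2 :: w).

Definition ege (L : word -> Prop) (w : word) (u v : vertex) : Prop :=
  match u, v with
  | (false, a), (true, b) => L (a :: rcons w b)
  | (true, b), (false, a) => L (a :: rcons w b)
  | _, _ => False
  end.

Fixpoint walk_in (P : vertex -> Prop) (E : vertex -> vertex -> Prop)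
    (x : vertex) (s : seq vertex) : Prop :=
  match s with
  | [::] => True
  | y :: s' => P y /\ E x y /\ walk_in P E y s'
  end.

Definition connected (P : vertex -> Prop) (E : vertex -> vertex -> Prop) : Prop :=
  forall u v, P u -> P v -> exists s, walk_in P E u s /\ last u s = v.

(* no cycle (of length >= 3, with distinct vertices) *)
Definition acyclic (P : vertex -> Prop) (E : vertex -> vertex -> Prop) : Prop :=
  ~ exists x s, [/\ P x, (2 <= size s)%N, uniq (x :: s), walk_in P E x s
                   & E (last x s) x].

Definition is_tree (P : vertex -> Prop) (E : vertex -> vertex -> Prop) : Prop :=
  connected P E /\ acyclic P E.

Definition dendric (L : word -> Prop) (w : word) : Prop :=
  is_tree (egv L w) (ege L w).

Definition bispecial (L : word -> Prop) (w : word) : Prop :=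
  (exists a a', a != a' /\ L (a :: w) /\ L (a' :: w)) /\
  (exists b b', b != b' /\ L (rcons w b) /\ L (rcons w b')).

(* graph obtained by removing vertex r and the resulting isolated vertices *)
Definition removed_vertices (L : word -> Prop) (w : word) (r : vertex) (v : vertex) : Prop :=
  [/\ egv L w v, v != r & exists u, u != r /\ ege L w v u].

Definition Cminus (L : word -> Prop) (w : word) (a : A3) : Prop :=
  egv L w (false, a) /\ ~ connected (removed_vertices L w (false, a)) (ege L w).
Definition Cplus (L : word -> Prop) (w : word) (b : A3) : Prop :=
  egv L w (true, b) /\ ~ connected (removed_vertices L w (true, b)) (ege L w).

Definition Cminus_all (L : word -> Prop) (a : A3) : Prop :=
  exists w, L w /\ Cminus L w a.
Definition Cplus_all (L : word -> Prop) (b : A3) : Prop :=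
  exists w, L w /\ Cplus L w b.

Definition dendric_shift (X : subshift) : Prop :=
  forall w, lang X w -> dendric (lang X) w.

Definition morph := A3 -> word.

Definition alpha : morph := fun c =>
  match c with a1 => [:: a1] | a2 => [:: a1; a2] | a3 => [:: a1; a3] end.
Definition beta : morph := fun c =>
  match c with a1 => [:: a1] | a2 => [:: a1; a2] | a3 => [:: a1; a3; a2] end.
Definition gamma : morph := fun c =>
  match c with a1 => [:: a1] | a2 => [:: a1; a2] | a3 => [:: a1; a2; a3] end.
Definition delta (k : nat) : morph := fun c =>
  match c with
  | a1 => [:: a1]
  | a2 => a1 :: a2 :: nseq k a3
  | a3 => a1 :: a2 :: nseq k.+1 a3
  end.
Definition zeta (k : nat) : morph := fun c =>
  match c with
  | a1 => a1 :: nseq k a3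
  | a2 => [:: a1; a2]
  | a3 => a1 :: nseq k.+1 a3
  end.
Definition eta : morph := fun c =>
  match c with a1 => [:: a1; a3] | a2 => [:: a1; a2] | a3 => [:: a1; a2; a3] end.

Definition in_S3 (s : morph) : Prop :=
  s =1 alpha \/ s =1 beta \/ s =1 gamma \/ s =1 eta \/
  (exists k, (0 < k)%N /\ s =1 delta k) \/ (exists k, (0 < k)%N /\ s =1 zeta k).

Definition img (s : morph) (v : word) : word := flatten (map s v).

Fixpoint lcp (u v : word) : word :=
  match u, v with
  | x :: u', y :: v' => if x == y then x :: lcp u' v' else [::]
  | _, _ => [::]
  end.
Definition lcs (u v : word) : word := rev (lcp (rev u) (rev v)).

(* T^-(s) (resp. T^+(s)) is a singleton *)
Definition left_invariant (s : morph) : Prop :=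
  exists t, forall c1 c2 : A3, c1 != c2 -> lcs (s c1) (s c2) = t.
Definition right_invariant (s : morph) : Prop :=
  exists t, forall c1 c2 : A3, c1 != c2 -> lcp (s c1) (s c2) = t.

(* starting position of s(x_i) in s(x): p(0)=0, p(i+1)=p(i)+|s(x_i)| *)
Definition pos (s : morph) (x : config) (i : int) : int :=
  match i with
  | Posz n => (\sum_(j < n) size (s (x (Posz j))))%:Z
  | Negz n => (- (\sum_(j < n.+1) size (s (x (- (Posz j.+1))%R)))%:Z)%R
  end.

(* Y = { S^k s(x) : x in X, 0 <= k < |s(x_0)| } *)
Definition shift_image (X : subshift) (s : morph) : subshift := fun y =>
  exists x, X x /\ exists k : nat, k < size (s (x 0%R)) /\
    forall (i : int) (j : nat), j < size (s (x i)) ->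
      y (pos s x i + j%:Z - k%:Z)%R = nth a1 (s (x i)) j.

Definition ext_image (X : subshift) (s : morph) (u v : word) : Prop :=
  lang (shift_image X s) u /\ u != [::] /\ a1 \in u /\
  exists (sf pf : word) (a b : A3),
    lang X (a :: rcons v b) /\ u = sf ++ img s v ++ pf /\
    suffix sf (s a) /\ size sf < size (s a) /\
    prefix pf (s b) /\ 0 < size pf.

Definition DP (X : subshift) (s : morph) : Prop :=
  in_S3 s /\
  forall v u, lang X v -> ext_image X s u v -> bispecial (lang (shift_image X s)) u ->
    dendric (lang (shift_image X s)) u.

From Pilot Require Import Defs.
From mathcomp Require Import all_boot all_order all_algebra zify.
From Stdlib Require Import ClassicalEpsilon FunctionalExtensionality.
Set Implicit Arguments. Unset Strict Implicit. Unset Printing Implicit Defensive.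
Import GRing.Theory.

(* Every morphism of S_3 maps each letter to a word starting with 1, so a
   two-letter factor of the image Y is either a factor of some sigma(a) or the
   last letter of some sigma(a) followed by 1.  This yields a short table of
   the possible two-letter factors of Y.  When sigma is not left-invariant
   (beta, delta^(k), zeta^(k), eta) the table shows that every letter has at
   most two left extensions in Y, so for a non-empty u the graph E_Y(u) has at
   most two left vertices; removing one of them leaves a star centred at the
   other, hence C^-_Y(u) is empty for every non-empty u, dendric or not.  Therefore
   C^-(Y) = C^-_Y(eps), and a letter of C^-_Y(eps) is read off the table: after
   removing it, a single edge of E_Y(eps) forms a connected component.  The
   right-hand side (gamma, delta^(k), zeta^(k), eta) is symmetric. *)

Section Tiling.
Variables (P : int -> int) (f : int -> nat).
Hypothesis P0 : P 0%R = 0%R.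
Hypothesis PS : forall i, P (i + 1)%R = (P i + (f i)%:Z)%R.
Hypothesis f_gt0 : forall i, 0 < f i.

Let PS_at i j : j = (i + 1)%R -> P j = (P i + (f i)%:Z)%R.
Proof. by move=> ->. Qed.

Lemma tiling_unbounded (n : nat) : (n%:Z <= P n)%R /\ (P (- n%:Z) <= - n%:Z)%R.
Proof.
elim: n => [|n [IHr IHl]]; first by rewrite P0.
have := PS_at (i := n%:Z) (j := n.+1%:Z) ltac:(lia).
have := PS_at (i := (- n.+1%:Z)%R) (j := (- n%:Z)%R) ltac:(lia).
have := f_gt0 n%:Z; have := f_gt0 (- n.+1%:Z)%R; lia.
Qed.

Lemma tiling_cover (m : int) : exists i (j : nat), j < f i /\ m = (P i + j%:Z)%R.
Proof.
suff cover n : (P (- n%:Z) <= m < P n)%R ->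
    exists i (j : nat), j < f i /\ m = (P i + j%:Z)%R.
  by have [? ?] := tiling_unbounded (absz m).+1; apply: (cover (absz m).+1); lia.
elim: n => [|n IHn]; first by rewrite P0; lia.
have := PS_at (i := n%:Z) (j := n.+1%:Z) ltac:(lia).
have := PS_at (i := (- n.+1%:Z)%R) (j := (- n%:Z)%R) ltac:(lia).
move=> Pl Pr /andP[ml mr].
have [mn|] := boolP (m < P (- n%:Z))%R.
  by exists (- n.+1%:Z)%R, (absz (m - P (- n.+1%:Z))); split; lia.
have [|mn' nm] := boolP (m < P n)%R; first by move=> *; apply: IHn; lia.
by exists (Posz n), (absz (m - P n)); split; lia.
Qed.

Lemma tiling_le_next (d : nat) i : (P i + (f i)%:Z <= P (i + d.+1%:Z))%R.
Proof.
elim: d => [|d IHd].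
  by have := PS_at (i := i) (j := (i + 1%:Z)%R) ltac:(lia); lia.
by have := PS_at (i := (i + d.+1%:Z)%R) (j := (i + d.+2%:Z)%R) ltac:(lia); lia.
Qed.

Lemma tiling_inj i i' (j j' : nat) : j < f i -> j' < f i' ->
  (P i + j%:Z)%R = (P i' + j'%:Z)%R -> i = i' /\ j = j'.
Proof.
move=> lt_j lt_j'.
have [lt_ii'|lt_i'i|<-] := Order.TotalTheory.ltgtP i i'; last by split=> //; lia.
- have := tiling_le_next (absz (i' - i - 1)%R) i.
  have -> : (i + Posz (absz (i' - i - 1)%R).+1)%R = i' by lia.
  lia.
- have := tiling_le_next (absz (i - i' - 1)%R) i'.
  have -> : (i' + Posz (absz (i - i' - 1)%R).+1)%R = i by lia.
  lia.
Qed.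

End Tiling.

Lemma pos0 s x : pos s x 0%R = 0%R.
Proof. by rewrite /= big_ord0. Qed.

Lemma posS s x (i : int) : pos s x (i + 1)%R = (pos s x i + (size (s (x i)))%:Z)%R.
Proof.
case: i => [n|[|m]].
- have -> : (Posz n + 1)%R = Posz n.+1 by lia.
  by rewrite /= big_ord_recr /= PoszD.
- have -> : (Negz 0 + 1)%R = Posz 0 by lia.
  by rewrite /= big_ord1 big_ord0 addNr.
- have -> : (Negz m.+1 + 1)%R = Negz m by lia.
  by rewrite /= (big_ord_recr m.+1) /= PoszD opprD -addrA addNr addr0.
Qed.

Definition transition (s : morph) (c d : A3) : Prop :=
  exists a b (j : nat), [/\ j < size (s a), nth a1 (s a ++ s b) j = c
                          & nth a1 (s a ++ s b) j.+1 = d].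

Section ImageLanguage.
Variables (X : subshift) (s : morph).
Hypothesis s_nonerasing : forall e, 0 < size (s e).
Local Notation LY := (lang (shift_image X s)).

Let tiling_pos x := tiling_cover (pos0 s x) (posS s x) (fun i => s_nonerasing (x i)).

Lemma image_config_exists x : exists y : config, forall i (j : nat),
  j < size (s (x i)) -> y (pos s x i + j%:Z)%R = nth a1 (s (x i)) j.
Proof.
have cover (m : int) : exists p : int * nat,
    p.2 < size (s (x p.1)) /\ m = (pos s x p.1 + p.2%:Z)%R.
  by have [i [j ij]] := tiling_pos x m; exists (i, j).
have [g gP] := choice _ cover.
exists (fun m => nth a1 (s (x (g m).1)) (g m).2) => i j lt_j.
have [lt_g eq_g] := gP (pos s x i + j%:Z)%R.
by have [-> ->] := tiling_inj (pos0 s x) (posS s x) lt_g lt_j (esym eq_g).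
Qed.

Lemma image_config_cat (x y : config) (k : nat) :
  (forall i (j : nat), j < size (s (x i)) ->
     y (pos s x i + j%:Z - k%:Z)%R = nth a1 (s (x i)) j) ->
  forall i (j : nat), j <= size (s (x i)) ->
     y (pos s x i + j%:Z - k%:Z)%R = nth a1 (s (x i) ++ s (x (i + 1)%R)) j.
Proof.
move=> y_img i j le_j; rewrite nth_cat.
case: ltnP => [|ge_j]; first exact: y_img.
have -> : j = size (s (x i)) by lia.
rewrite subnn -y_img ?posS //; congr y; lia.
Qed.

Lemma lang_image_pair_transition c d : LY [:: c; d] -> transition s c d.
Proof.
move=> [y [[x [_ [k [_ y_img]]]] [i0 y_cd]]].
have [i [j [lt_j eq_ij]]] := tiling_pos x (i0 + k%:Z)%R.
have y_cat := image_config_cat y_img.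
move: (y_cd 0%N erefl) (y_cd 1%N erefl) => /= y_c y_d.
exists (x i), (x (i + 1)%R), j; split=> //.
- by rewrite -(y_cat i j (ltnW lt_j)) -y_c; congr y; lia.
- by rewrite -(y_cat i j.+1 lt_j) -y_d; congr y; lia.
Qed.

Lemma lang_image_pair_of_block a (j : nat) d : lang X [:: a] -> j < size (s a) ->
  (forall b, nth a1 (s a ++ s b) j.+1 = d) -> LY [:: nth a1 (s a) j; d].
Proof.
move=> [x [Xx [i0 /(_ 0%N erefl) /= <-]]] lt_j s_d.
have [y y_img] := image_config_exists x.
have y_img0 i (j' : nat) : j' < size (s (x i)) ->
    y (pos s x i + j'%:Z - 0%:Z)%R = nth a1 (s (x i)) j'.
  by rewrite subr0; apply: y_img.
have y_cat := image_config_cat y_img0.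
exists y; split; first by exists x; split=> //; exists 0%N.
set i := (i0 + 0%:Z)%R in lt_j s_d *.
exists (pos s x i + j%:Z)%R => -[|[|//]] _ /=.
- by rewrite -y_img //; congr y; lia.
- by rewrite -(s_d (x (i + 1)%R)) -y_cat //; congr y; lia.
Qed.

End ImageLanguage.

Lemma star_connected (P : vertex -> Prop) E h :
  (forall v, P v -> v = h \/ [/\ P h, E v h & E h v]) -> connected P E.
Proof.
move=> star u v Pu Pv.
case: (star u Pu) => [uh|[Ph Euh Ehu]]; case: (star v Pv) => [vh|[_ Evh Ehv]].
- by exists [::]; rewrite uh vh.
- by exists [:: v]; rewrite uh.
- by exists [:: h]; rewrite vh.
- by exists [:: h; v].
Qed.

Lemma walk_in_closed (P Q : vertex -> Prop) E :
  (forall x y, Q x -> P y -> E x y -> Q y) ->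
  forall p x, Q x -> walk_in P E x p -> Q (last x p).
Proof.
by move=> closedQ; elim=> [|y p IHp] x //= Qx [Py [Exy /(IHp y (closedQ x y Qx Py Exy))]].
Qed.

Lemma closed_not_connected (P Q : vertex -> Prop) E u v :
  P u -> P v -> Q u -> ~ Q v -> (forall x y, Q x -> P y -> E x y -> Q y) ->
  ~ connected P E.
Proof.
move=> Pu Pv Qu nQv closedQ /(_ u v Pu Pv) [p [walk_p last_p]].
by apply: nQv; rewrite -last_p; exact: (walk_in_closed closedQ Qu walk_p).
Qed.

Definition factorial (L : word -> Prop) := forall w w', L (w ++ w') -> L w /\ L w'.

Lemma lang_factorial X : factorial (lang X).
Proof.
move=> w w' [x [Xx [i x_ww']]]; split; exists x; split=> //.
- exists i => j lt_j.
  by have := x_ww' j; rewrite nth_cat lt_j size_cat => -> //; lia.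
- exists (i + (size w)%:Z)%R => j lt_j.
  have := x_ww' (size w + j)%N.
  rewrite nth_cat [(_ < size w)%N]ltnNge leq_addr addKn size_cat ltn_add2l /=.
  by move=> <- //; congr x; lia.
Qed.

Section ExtensionGraphs.
Variable L : word -> Prop.
Hypothesis L_factorial : factorial L.

Lemma two_left_ext_no_Cminus u a :
  (exists p1 p2, forall c, L (c :: u) -> c = p1 \/ c = p2) -> ~ Cminus L u a.
Proof.
move=> [p1 [p2 ext_u]] [La]; apply.
have [d ext_d] : exists d, forall c, L (c :: u) -> c != a -> c = d.
  by case: (ext_u a La) => ->; [exists p2 | exists p1] => c /ext_u[]->; rewrite ?eqxx.
apply: (star_connected (h := (false, d))) => -[[] c] [Lv ne_v [[[] c'] [ne_c' E]]] //.
- have Lc' : L (c' :: u) by move: E => /=; rewrite -cats1 -cat_cons => /L_factorial[].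
  have c'd := ext_d c' Lc' ne_c'; subst c'.
  by right; split=> //; split=> //; exists (true, c).
- by left; rewrite (ext_d c Lv ne_v).
Qed.

Lemma two_right_ext_no_Cplus u b :
  (exists p1 p2, forall c, L (rcons u c) -> c = p1 \/ c = p2) -> ~ Cplus L u b.
Proof.
move=> [p1 [p2 ext_u]] [Lb]; apply.
have [d ext_d] : exists d, forall c, L (rcons u c) -> c != b -> c = d.
  by case: (ext_u b Lb) => ->; [exists p2 | exists p1] => c /ext_u[]->; rewrite ?eqxx.
apply: (star_connected (h := (true, d))) => -[[] c] [Lv ne_v [[[] c'] [ne_c' E]]] //.
- by left; rewrite (ext_d c Lv ne_v).
- have Lc' : L (rcons u c') by move: E => /= /(L_factorial (w := [:: c]))[].
  have c'd := ext_d c' Lc' ne_c'; subst c'.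
  by right; split=> //; split=> //; exists (false, c).
Qed.

Lemma Cminus_all_nil :
  (forall u a, u != [::] -> ~ Cminus L u a) ->
  forall a, Cminus_all L a <-> Cminus L [::] a.
Proof.
move=> noC a; split=> [[[|c u] [_ Ca]] // | Ca]; first by case: (noC (c :: u) a isT Ca).
by exists [::]; split=> //; case: (L_factorial (w := [::]) Ca.1).
Qed.

Lemma Cplus_all_nil :
  (forall u b, u != [::] -> ~ Cplus L u b) ->
  forall b, Cplus_all L b <-> Cplus L [::] b.
Proof.
move=> noC b; split=> [[[|c u] [_ Cb]] // | Cb]; first by case: (noC (c :: u) b isT Cb).
by exists [::]; split=> //; case: (L_factorial (w := [::]) Cb.1).
Qed.

(* The [all] conditions below say that, once the vertex of r is removed, the
   edge {c^-, d^+} is a whole connected component of E_L(eps); the edge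
   {c'^-, d'^+} provides a vertex outside it. *)
Section IsolatedEdge.
Variables (l : seq (A3 * A3)) (r c d c' d' : A3).
Hypothesis L_pairs : forall e f, L [:: e; f] -> (e, f) \in l.
Hypotheses (Lcd : L [:: c; d]) (Lcd' : L [:: c'; d']).
Let component (v : vertex) : Prop := v \in [:: (false, c); (true, d)].

Let componentE b x : component (b, x) = (x == if b then d else c).
Proof. by case: b; rewrite /component !inE !xpair_eqE /= ?orbF. Qed.

Lemma Cminus_nil_of_isolated_edge :
  L [:: r] -> c != r -> c' != r -> c' != c ->
  all (fun p => (p.1 != r) ==> ((p.1 == c) == (p.2 == d))) l ->
  Cminus L [::] r.
Proof.
move=> Lr cr c'r c'c /allP isolated; split=> //.
have removed e f : L [:: e; f] -> e != r ->
    removed_vertices L [::] (false, r) (false, e).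
  by move=> Lef er; split; [case: (L_factorial (w := [:: e]) Lef) | | exists (true, f)].
apply: (closed_not_connected (Q := component) (removed _ _ Lcd cr) (removed _ _ Lcd' c'r)).
- by rewrite componentE.
- by rewrite componentE (negbTE c'c).
move=> [[] x] [[] y] //=; rewrite !componentE => /eqP-> [_ yr _] /L_pairs/isolated/=.
- by move: yr; rewrite xpair_eqE /= => -> /=; rewrite eqxx => /eqP ->.
- by rewrite cr eqxx => /eqP <-.
Qed.

Lemma Cplus_nil_of_isolated_edge :
  L [:: r] -> d != r -> d' != r -> d' != d ->
  all (fun p => (p.2 != r) ==> ((p.1 == c) == (p.2 == d))) l ->
  Cplus L [::] r.
Proof.
move=> Lr dr d'r d'd /allP isolated; split=> //.
have removed e f : L [:: e; f] -> f != r ->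
    removed_vertices L [::] (true, r) (true, f).
  by move=> Lef fr; split; [case: (L_factorial (w := [:: e]) Lef) | | exists (false, e)].
apply: (closed_not_connected (Q := component) (removed _ _ Lcd dr) (removed _ _ Lcd' d'r)).
- by rewrite componentE.
- by rewrite componentE (negbTE d'd).
move=> [[] x] [[] y] //=; rewrite !componentE => /eqP-> [_ yr _] /L_pairs/isolated/=.
- by rewrite dr eqxx => /eqP ->.
- by move: yr; rewrite xpair_eqE /= => -> /=; rewrite eqxx => /eqP <-.
Qed.

End IsolatedEdge.

End ExtensionGraphs.

Definition starts_with_1 (s : morph) := forall e, exists w, s e = a1 :: w.

Definition two_predecessors (l : seq (A3 * A3)) :=
  forall c, exists p1 p2, forall e, (e, c) \in l -> e = p1 \/ e = p2.

Definition two_successors (l : seq (A3 * A3)) :=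
  forall c, exists p1 p2, forall e, (c, e) \in l -> e = p1 \/ e = p2.

Section MorphismStartingWith1.
Variables (X : subshift) (s : morph) (l : seq (A3 * A3)).
Hypothesis X_shift : shift_space X.
Hypothesis s_starts_with_1 : starts_with_1 s.
Hypothesis s_transitions : forall e c, transition s e c -> (e, c) \in l.
Local Notation LY := (lang (shift_image X s)).

Let s_nonerasing e : 0 < size (s e).
Proof. by have [w ->] := s_starts_with_1 e. Qed.

Lemma lang_image_pair a (j : nat) : j < size (s a) ->
  LY [:: nth a1 (s a) j; nth a1 (rcons (s a) a1) j.+1].
Proof.
move=> lt_j; apply: (lang_image_pair_of_block s_nonerasing (X_shift.2.2 a) lt_j) => b.
rewrite -cats1 !nth_cat; case: ltnP => // ge_j.
have -> : (j.+1 - size (s a) = 0)%N by lia.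
by have [w ->] := s_starts_with_1 b.
Qed.

Lemma lang_image_letter a (j : nat) : j < size (s a) -> LY [:: nth a1 (s a) j].
Proof. by move=> /lang_image_pair /(lang_factorial (w := [:: _]))[]. Qed.

Lemma lang_image_pair_table e c : LY [:: e; c] -> (e, c) \in l.
Proof. by move=> /(lang_image_pair_transition s_nonerasing)/s_transitions. Qed.

Lemma image_Cminus_nil_of_isolated_edge r c d c' d' :
  LY [:: c; d] -> LY [:: c'; d'] -> LY [:: r] -> c != r -> c' != r -> c' != c ->
  all (fun p => (p.1 != r) ==> ((p.1 == c) == (p.2 == d))) l ->
  Cminus LY [::] r.
Proof. exact: (Cminus_nil_of_isolated_edge (@lang_factorial _) lang_image_pair_table). Qed.

Lemma image_Cplus_nil_of_isolated_edge r c d c' d' :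
  LY [:: c; d] -> LY [:: c'; d'] -> LY [:: r] -> d != r -> d' != r -> d' != d ->
  all (fun p => (p.2 != r) ==> ((p.1 == c) == (p.2 == d))) l ->
  Cplus LY [::] r.
Proof. exact: (Cplus_nil_of_isolated_edge (@lang_factorial _) lang_image_pair_table). Qed.

Lemma Cminus_image_of_two_predecessors r :
  two_predecessors l ->
  Cminus LY [::] r ->
  (forall v u, lang X v -> dendric (lang X) v -> bispecial (lang X) v ->
     ext_image X s u v -> dendric LY u -> forall a, ~ Cminus LY u a) /\
  (dendric_shift X -> DP X s ->
     (forall a, Cminus_all LY a <-> Cminus LY [::] a) /\ exists a, Cminus LY [::] a).
Proof.
move=> two_pred Cr.
have noC u a : u != [::] -> ~ Cminus LY u a.
  case: u => [//|c u] _; apply: two_left_ext_no_Cminus; first exact: lang_factorial.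
  have [p1 [p2 pred_c]] := two_pred c; exists p1, p2 => e.
  by move/(lang_factorial (w := [:: e; c]))=> [/lang_image_pair_table/pred_c].
split=> [v u _ _ _ [_ [u_nil _]] _ a|_ _]; first exact: noC.
by split; [apply: Cminus_all_nil; first exact: lang_factorial | exists r].
Qed.

Lemma Cplus_image_of_two_successors r :
  two_successors l ->
  Cplus LY [::] r ->
  (forall v u, lang X v -> dendric (lang X) v -> bispecial (lang X) v ->
     ext_image X s u v -> dendric LY u -> forall b, ~ Cplus LY u b) /\
  (dendric_shift X -> DP X s ->
     (forall b, Cplus_all LY b <-> Cplus LY [::] b) /\ exists b, Cplus LY [::] b).
Proof.
move=> two_succ Cr.
have noC u b : u != [::] -> ~ Cplus LY u b.
  case/lastP: u => [//|u c] _; apply: two_right_ext_no_Cplus; first exact: lang_factorial.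
  have [p1 [p2 succ_c]] := two_succ c; exists p1, p2 => e.
  by rewrite -!cats1 -catA => /(lang_factorial (w := u))[_ /lang_image_pair_table/succ_c].
split=> [v u _ _ _ [_ [u_nil _]] _ b|_ _]; first exact: noC.
by split; [apply: Cplus_all_nil; first exact: lang_factorial | exists r].
Qed.

End MorphismStartingWith1.

Lemma nseq_cat_pair_in (l : seq (A3 * A3)) n x w j :
  (x, x) \in l -> (x, nth a1 w 0) \in l -> j < n ->
  (nth a1 (nseq n x ++ w) j, nth a1 (nseq n x ++ w) j.+1) \in l.
Proof.
move=> xx_l xw_l lt_j; rewrite !nth_cat size_nseq lt_j !nth_nseq lt_j.
case: ltnP => // ge_j.
by have -> : (j.+1 - n = 0)%N by lia.
Qed.

Definition beta_pairs := [:: (a1, a1); (a1, a2); (a1, a3); (a2, a1); (a3, a2)].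
Definition gamma_pairs := [:: (a1, a1); (a1, a2); (a2, a1); (a2, a3); (a3, a1)].
Definition delta_pairs := [:: (a1, a1); (a1, a2); (a2, a3); (a3, a1); (a3, a3)].
Definition zeta_pairs := [:: (a1, a2); (a1, a3); (a2, a1); (a3, a1); (a3, a3)].
Definition eta_pairs := [:: (a1, a2); (a1, a3); (a2, a1); (a2, a3); (a3, a1)].

Lemma beta_transitions e c : transition beta e c -> (e, c) \in beta_pairs.
Proof. by move=> [a [b [j [+ <- <-]]]]; case: a; case: b; case: j => [|[|[|j]]]. Qed.

Lemma gamma_transitions e c : transition gamma e c -> (e, c) \in gamma_pairs.
Proof. by move=> [a [b [j [+ <- <-]]]]; case: a; case: b; case: j => [|[|[|j]]]. Qed.

Lemma eta_transitions e c : transition Defs.eta e c -> (e, c) \in eta_pairs.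
Proof. by move=> [a [b [j [+ <- <-]]]]; case: a; case: b; case: j => [|[|[|j]]]. Qed.

Lemma delta_transitions k e c : transition (delta k.+1) e c -> (e, c) \in delta_pairs.
Proof.
move=> [a [b [j [+ <- <-]]]].
case: a; case: j => [|[|j]] //=; try by case: b.
all: rewrite size_nseq => lt_j.
- by apply: (nseq_cat_pair_in (n := k.+1)) => //; try lia; case: b.
- by apply: (nseq_cat_pair_in (n := k.+2)) => //; try lia; case: b.
Qed.

Lemma zeta_transitions k e c : transition (zeta k.+1) e c -> (e, c) \in zeta_pairs.
Proof.
move=> [a [b [j [+ <- <-]]]].
case: a; case: j => [|[|j]] //=; try by case: b.
all: rewrite ?size_nseq => lt_j.
- by apply: (nseq_cat_pair_in (n := k.+1) (j := 0)) => //; case: b.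
- by apply: (nseq_cat_pair_in (n := k)) => //; try lia; case: b.
- by apply: (nseq_cat_pair_in (n := k.+1)) => //; try lia; case: b.
Qed.

Lemma beta_starts_with_1 : starts_with_1 beta. Proof. by case; eexists. Qed.
Lemma gamma_starts_with_1 : starts_with_1 gamma. Proof. by case; eexists. Qed.
Lemma delta_starts_with_1 k : starts_with_1 (delta k). Proof. by case; eexists. Qed.
Lemma zeta_starts_with_1 k : starts_with_1 (zeta k). Proof. by case; eexists. Qed.
Lemma eta_starts_with_1 : starts_with_1 Defs.eta. Proof. by case; eexists. Qed.

Lemma beta_two_predecessors : two_predecessors beta_pairs.
Proof. by case; [exists a1, a2 | exists a1, a3 | exists a1, a1]; case; auto. Qed.
Lemma delta_two_predecessors : two_predecessors delta_pairs.
Proof. by case; [exists a1, a3 | exists a1, a1 | exists a2, a3]; case; auto. Qed.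
Lemma zeta_two_predecessors : two_predecessors zeta_pairs.
Proof. by case; [exists a2, a3 | exists a1, a1 | exists a1, a3]; case; auto. Qed.
Lemma eta_two_predecessors : two_predecessors eta_pairs.
Proof. by case; [exists a2, a3 | exists a1, a1 | exists a1, a2]; case; auto. Qed.

Lemma gamma_two_successors : two_successors gamma_pairs.
Proof. by case; [exists a1, a2 | exists a1, a3 | exists a1, a1]; case; auto. Qed.
Lemma delta_two_successors : two_successors delta_pairs.
Proof. by case; [exists a1, a2 | exists a3, a3 | exists a1, a3]; case; auto. Qed.
Lemma zeta_two_successors : two_successors zeta_pairs.
Proof. by case; [exists a2, a3 | exists a1, a1 | exists a1, a3]; case; auto. Qed.
Lemma eta_two_successors : two_successors eta_pairs.
Proof. by case; [exists a2, a3 | exists a1, a3 | exists a1, a1]; case; auto. Qed.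

Lemma alpha_left_invariant : left_invariant alpha.
Proof. by exists [::]; case; case. Qed.
Lemma gamma_left_invariant : left_invariant gamma.
Proof. by exists [::]; case; case. Qed.
Lemma alpha_right_invariant : right_invariant alpha.
Proof. by exists [:: a1]; case; case. Qed.
Lemma beta_right_invariant : right_invariant beta.
Proof. by exists [:: a1]; case; case. Qed.

Section Witnesses.
Variables (X : subshift) (k : nat).
Hypothesis X_shift : shift_space X.

Lemma beta_Cminus_nil : Cminus (lang (shift_image X beta)) [::] a1.
Proof.
have pair := lang_image_pair X_shift beta_starts_with_1.
have letter := lang_image_letter X_shift beta_starts_with_1.
exact: (image_Cminus_nil_of_isolated_edge beta_starts_with_1 beta_transitions
          (pair a3 1 isT) (pair a2 1 isT) (letter a1 0 isT)).
Qed.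

Lemma delta_Cminus_nil : Cminus (lang (shift_image X (delta k.+1))) [::] a3.
Proof.
have pair := lang_image_pair X_shift (delta_starts_with_1 k.+1).
have letter := lang_image_letter X_shift (delta_starts_with_1 k.+1).
exact: (image_Cminus_nil_of_isolated_edge (delta_starts_with_1 k.+1) (@delta_transitions k)
          (pair a2 1 isT) (pair a2 0 isT) (letter a2 2 isT)).
Qed.

Lemma zeta_Cminus_nil : Cminus (lang (shift_image X (zeta k.+1))) [::] a3.
Proof.
have pair := lang_image_pair X_shift (zeta_starts_with_1 k.+1).
have letter := lang_image_letter X_shift (zeta_starts_with_1 k.+1).
exact: (image_Cminus_nil_of_isolated_edge (zeta_starts_with_1 k.+1) (@zeta_transitions k)
          (pair a2 1 isT) (pair a2 0 isT) (letter a1 1 isT)).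
Qed.

Lemma eta_Cminus_nil : Cminus (lang (shift_image X Defs.eta)) [::] a2.
Proof.
have pair := lang_image_pair X_shift eta_starts_with_1.
have letter := lang_image_letter X_shift eta_starts_with_1.
exact: (image_Cminus_nil_of_isolated_edge eta_starts_with_1 eta_transitions
          (pair a1 1 isT) (pair a1 0 isT) (letter a2 1 isT)).
Qed.

Lemma gamma_Cplus_nil : Cplus (lang (shift_image X gamma)) [::] a1.
Proof.
have pair := lang_image_pair X_shift gamma_starts_with_1.
have letter := lang_image_letter X_shift gamma_starts_with_1.
exact: (image_Cplus_nil_of_isolated_edge gamma_starts_with_1 gamma_transitions
          (pair a2 0 isT) (pair a3 1 isT) (letter a1 0 isT)).
Qed.

Lemma delta_Cplus_nil : Cplus (lang (shift_image X (delta k.+1))) [::] a1.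
Proof.
have pair := lang_image_pair X_shift (delta_starts_with_1 k.+1).
have letter := lang_image_letter X_shift (delta_starts_with_1 k.+1).
exact: (image_Cplus_nil_of_isolated_edge (delta_starts_with_1 k.+1) (@delta_transitions k)
          (pair a2 0 isT) (pair a2 1 isT) (letter a1 0 isT)).
Qed.

Lemma zeta_Cplus_nil : Cplus (lang (shift_image X (zeta k.+1))) [::] a3.
Proof.
have pair := lang_image_pair X_shift (zeta_starts_with_1 k.+1).
have letter := lang_image_letter X_shift (zeta_starts_with_1 k.+1).
exact: (image_Cplus_nil_of_isolated_edge (zeta_starts_with_1 k.+1) (@zeta_transitions k)
          (pair a2 0 isT) (pair a2 1 isT) (letter a1 1 isT)).
Qed.

Lemma eta_Cplus_nil : Cplus (lang (shift_image X Defs.eta)) [::] a3.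
Proof.
have pair := lang_image_pair X_shift eta_starts_with_1.
have letter := lang_image_letter X_shift eta_starts_with_1.
exact: (image_Cplus_nil_of_isolated_edge eta_starts_with_1 eta_transitions
          (pair a2 0 isT) (pair a2 1 isT) (letter a1 1 isT)).
Qed.

End Witnesses.

Unset Implicit Arguments.

Theorem lemma5p7 (X : subshift) (s : morph) :
  shift_space X -> in_S3 s ->
  (~ left_invariant s ->
     (forall v u, lang X v -> dendric (lang X) v -> bispecial (lang X) v ->
        ext_image X s u v -> dendric (lang (shift_image X s)) u ->
        forall a, ~ Cminus (lang (shift_image X s)) u a) /\
     (dendric_shift X -> DP X s ->
        (forall a, Cminus_all (lang (shift_image X s)) a <-> Cminus (lang (shift_image X s)) [::] a) /\
        exists a, Cminus (lang (shift_image X s)) [::] a)) /\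
  (~ right_invariant s ->
     (forall v u, lang X v -> dendric (lang X) v -> bispecial (lang X) v ->
        ext_image X s u v -> dendric (lang (shift_image X s)) u ->
        forall b, ~ Cplus (lang (shift_image X s)) u b) /\
     (dendric_shift X -> DP X s ->
        (forall b, Cplus_all (lang (shift_image X s)) b <-> Cplus (lang (shift_image X s)) [::] b) /\
        exists b, Cplus (lang (shift_image X s)) [::] b)).
Proof.
move=> X_shift s_S3.
have morph_eq M : s =1 M -> s = M by move=> ?; apply: functional_extensionality.
case: s_S3 => [/morph_eq->|[/morph_eq->|[/morph_eq->|[/morph_eq->|]]]].
- by split=> [/(_ alpha_left_invariant)|/(_ alpha_right_invariant)].
- split=> [_|/(_ beta_right_invariant)//].
  exact: (Cminus_image_of_two_predecessors beta_starts_with_1 beta_transitions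
           beta_two_predecessors (beta_Cminus_nil X_shift)).
- split=> [/(_ gamma_left_invariant)//|_].
  exact: (Cplus_image_of_two_successors gamma_starts_with_1 gamma_transitions
           gamma_two_successors (gamma_Cplus_nil X_shift)).
- split=> _.
  + exact: (Cminus_image_of_two_predecessors eta_starts_with_1 eta_transitions
             eta_two_predecessors (eta_Cminus_nil X_shift)).
  + exact: (Cplus_image_of_two_successors eta_starts_with_1 eta_transitions
             eta_two_successors (eta_Cplus_nil X_shift)).
case=> [] [[|k] [//= _ /morph_eq->]]; split=> _.
- exact: (Cminus_image_of_two_predecessors (delta_starts_with_1 k.+1) (@delta_transitions k)
           delta_two_predecessors (delta_Cminus_nil k X_shift)).
- exact: (Cplus_image_of_two_successors (delta_starts_with_1 k.+1) (@delta_transitions k)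
           delta_two_successors (delta_Cplus_nil k X_shift)).
- exact: (Cminus_image_of_two_predecessors (zeta_starts_with_1 k.+1) (@zeta_transitions k)
           zeta_two_predecessors (zeta_Cminus_nil k X_shift)).
- exact: (Cplus_image_of_two_successors (zeta_starts_with_1 k.+1) (@zeta_transitions k)
           zeta_two_successors (zeta_Cplus_nil k X_shift)).
Qed.
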